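(* Let $\Omega\subsetneq\mathbb{S}^m$ be a domain and $\rho\in C^1(\Omega)$. Then the associated map $\phi:\Omega\to\mathbb{H}^{m+1}$ is proper if and only if, for every $p\in\partial\Omega$, $$\lim_{x\to p}\big(\rho(x)^2+|\nabla\rho(x)|^2\big)=+\infty .$$
   Context: $\mathbb{S}^m\subset\mathbb{R}^{m+1}$ is the unit sphere with round metric $g_0$; $\nabla$ and $|\cdot|$ denote gradient and norm with respect to $g_0$ (so $\nabla\rho(x)\in T_x\mathbb{S}^m\subset\mathbb{R}^{m+1}$). Let $\mathbb{L}^{m+2}$ be $\mathbb{R}^{m+2}$ with the Lorentzian inner product $\langle\!\langle x,y\rangle\!\rangle=-x_0y_0+\sum_{i=1}^{m+1}x_iy_i$, and $\mathbb{H}^{m+1}=\{x\in\mathbb{L}^{m+2}:\langle\!\langle x,x\rangle\!\rangle=-1,\ x_0>0\}$ (hyperboloid model of hyperbolic space). For a domain $\Omega\subset\mathbb{S}^m$ and $\rho\in C^1(\Omega)$, the associated map $\phi=\phi^\rho:\Omega\to\mathbb{H}^{m+1}$ is $$\phi(x)=\frac{e^{\rho(x)}}{2}\Big(1+e^{-2\rho(x)}\big(1+|\nabla\rho(x)|^2\big)\Big)(1,x)+e^{-\rho(x)}\big(0,-x+\nabla\rho(x)\big).$$ A map is proper if preimages of compact subsets of $\mathbb{H}^{m+1}$ are compact in $\Omega$. *)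

From Stdlib Require Import Reals Lra Lia.
Open Scope R_scope.

(* Points of R^n are represented as functions nat -> R whose coordinates
   with index >= n vanish. Coordinates are indexed 0..n-1. *)
Definition vec := nat -> R.

Fixpoint sumR (n : nat) (f : nat -> R) : R :=
  match n with O => 0 | S k => sumR k f + f k end.

Definition inR (n : nat) (x : vec) : Prop := forall i, (n <= i)%nat -> x i = 0.

Definition dot (n : nat) (x y : vec) : R := sumR n (fun i => x i * y i).
Definition vnorm (n : nat) (x : vec) : R := sqrt (dot n x x).
Definition vsub (x y : vec) : vec := fun i => x i - y i.
Definition dist (n : nat) (x y : vec) : R := vnorm n (vsub x y).

Definition sphere (m : nat) (x : vec) : Prop := inR (S m) x /\ dot (S m) x x = 1.

Definition lorentz (m : nat) (x y : vec) : R :=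
  - x 0%nat * y 0%nat + sumR (S m) (fun i => x (S i) * y (S i)).

Definition hyperbolic (m : nat) (y : vec) : Prop :=
  inR (S (S m)) y /\ lorentz m y y = -1 /\ y 0%nat > 0.

Definition rel_open (m : nat) (U : vec -> Prop) : Prop :=
  forall x, U x -> exists r, r > 0 /\ forall y, sphere m y -> dist (S m) y x < r -> U y.

Definition is_domain (m : nat) (Omega : vec -> Prop) : Prop :=
  (forall x, Omega x -> sphere m x) /\
  rel_open m Omega /\
  (exists x, Omega x) /\
  (forall U V : vec -> Prop,
      rel_open m U -> rel_open m V ->
      (forall x, Omega x -> U x \/ V x) ->
      (forall x, Omega x -> U x -> V x -> False) ->
      (exists x, Omega x /\ U x) -> (exists x, Omega x /\ V x) -> False).

(* grad is the (spherical, round-metric) gradient of rho on Omega: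
   grad x is tangent to S^m at x and is the differential of rho at x
   along the sphere, i.e. rho y = rho x + <grad x, y - x> + o(|y - x|)
   for y in Omega, y -> x. *)
Definition is_sph_gradient (m : nat) (Omega : vec -> Prop) (rho : vec -> R) (grad : vec -> vec) : Prop :=
  forall x, Omega x ->
    inR (S m) (grad x) /\ dot (S m) (grad x) x = 0 /\
    forall eps, eps > 0 -> exists delta, delta > 0 /\
      forall y, Omega y -> dist (S m) y x < delta ->
        Rabs (rho y - rho x - dot (S m) (grad x) (vsub y x)) <= eps * dist (S m) y x.

Definition C1_on_sphere (m : nat) (Omega : vec -> Prop) (rho : vec -> R) (grad : vec -> vec) : Prop :=
  is_sph_gradient m Omega rho grad /\
  forall x, Omega x -> forall eps, eps > 0 -> exists delta, delta > 0 /\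
    forall y, Omega y -> dist (S m) y x < delta -> dist (S m) (grad y) (grad x) < eps.

(* the associated map phi : Omega -> H^{m+1}:
   phi(x) = e^rho/2 (1 + e^{-2 rho}(1 + |grad rho|^2)) (1, x) + e^{-rho} (0, -x + grad rho) *)
Definition assoc_map (m : nat) (rho : vec -> R) (grad : vec -> vec) (x : vec) : vec :=
  let c := exp (rho x) / 2 * (1 + exp (-2 * rho x) * (1 + vnorm (S m) (grad x) ^ 2)) in
  fun i => match i with
           | O => c * 1 + exp (- rho x) * 0
           | S j => c * x j + exp (- rho x) * (- x j + grad x j)
           end.

Definition seq_compact (n : nat) (K : vec -> Prop) : Prop :=
  forall u : nat -> vec, (forall k, K (u k)) ->
    exists (sub : nat -> nat) (l : vec),
      (forall k, (sub k < sub (S k))%nat) /\ K l /\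
      forall eps, eps > 0 -> exists N, forall k, (N <= k)%nat -> dist n (u (sub k)) l < eps.

Definition proper_map (m : nat) (Omega : vec -> Prop) (f : vec -> vec) : Prop :=
  forall K : vec -> Prop,
    (forall y, K y -> hyperbolic m y) -> seq_compact (S (S m)) K ->
    seq_compact (S m) (fun x => Omega x /\ K (f x)).

Definition boundary_pt (m : nat) (Omega : vec -> Prop) (p : vec) : Prop :=
  sphere m p /\ ~ Omega p /\
  forall r, r > 0 -> exists x, Omega x /\ dist (S m) x p < r.

Definition tends_to_infty_at (m : nat) (Omega : vec -> Prop) (F : vec -> R) (p : vec) : Prop :=
  forall M, exists delta, delta > 0 /\
    forall x, Omega x -> dist (S m) x p < delta -> F x > M.

(* The time coordinate of phi(x) is (e^rho + e^-rho (1 + |grad rho|^2)) / 2, and it is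
   bounded exactly where rho^2 + |grad rho|^2 is.  Since the compact subsets of H^{m+1} are
   the closed sets of bounded time coordinate, both directions reduce to sequences:
   if rho^2 + |grad rho|^2 stays bounded along x_k -> p in the boundary, the phi(x_k) lie
   in a compact cap while the x_k have no limit in Omega; conversely, if it blows up at
   the boundary, a sequence whose phi-images converge has a subsequence converging on the
   sphere, its limit cannot be a boundary point, so it lies in Omega, where phi is
   continuous. *)

From Stdlib Require Import Reals Lra Lia Psatz Classical FunctionalExtensionality ClassicalEpsilon.
Open Scope R_scope.

Lemma sumR_ext n f g : (forall i, (i < n)%nat -> f i = g i) -> sumR n f = sumR n g.
Proof.
  induction n as [|n IH]; intros H; simpl; [reflexivity|].
  rewrite IH, H; auto with arith.
Qed.

Lemma sumR_nonneg n f : (forall i, (i < n)%nat -> 0 <= f i) -> 0 <= sumR n f.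
Proof.
  induction n as [|n IH]; intros H; simpl; [lra|].
  assert (0 <= f n) by (apply H; lia).
  assert (0 <= sumR n f) by (apply IH; auto with arith).
  lra.
Qed.

Lemma sumR_term_le n f i :
  (forall j, (j < n)%nat -> 0 <= f j) -> (i < n)%nat -> f i <= sumR n f.
Proof.
  induction n as [|n IH]; intros H Hi; simpl; [lia|].
  assert (0 <= f n) by (apply H; lia).
  destruct (Nat.eq_dec i n) as [->|Hne].
  - assert (0 <= sumR n f) by (apply sumR_nonneg; auto with arith). lra.
  - assert (f i <= sumR n f) by (apply IH; [auto with arith | lia]). lra.
Qed.

Lemma dot_self_nonneg n x : 0 <= dot n x x.
Proof. apply sumR_nonneg; intros; apply Rle_0_sqr. Qed.

Lemma vnorm_sq n x : vnorm n x ^ 2 = dot n x x.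
Proof. apply pow2_sqrt, dot_self_nonneg. Qed.

Lemma coord_sq_le_dot n x i : (i < n)%nat -> x i * x i <= dot n x x.
Proof. apply (sumR_term_le n (fun j => x j * x j)); intros; apply Rle_0_sqr. Qed.

Lemma coord_le_dist n x y i : (i < n)%nat -> Rabs (x i - y i) <= dist n x y.
Proof.
  intros Hi. rewrite <- sqrt_Rsqr_abs. apply sqrt_le_1_alt.
  exact (coord_sq_le_dot n (vsub x y) i Hi).
Qed.

Lemma dot_lin_comb n x g a b :
  dot n (fun i => a * x i + b * g i) (fun i => a * x i + b * g i) =
  a ^ 2 * dot n x x + 2 * a * b * dot n g x + b ^ 2 * dot n g g.
Proof. unfold dot; induction n as [|n IH]; simpl; [ring|]. rewrite IH; ring. Qed.
Lemma Un_cv_const c : Un_cv (fun _ => c) c.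
Proof. intros e He. exists 0%nat. intros. unfold Rdist. rewrite Rminus_diag, Rabs_R0. lra. Qed.

Lemma Un_cv_ext a b l : (forall k, a k = b k) -> Un_cv a l -> Un_cv b l.
Proof.
  intros H Ha e He. destruct (Ha e He) as [N HN].
  exists N; intros k Hk; rewrite <- H; auto.
Qed.

Lemma Un_cv_exp a l : Un_cv a l -> Un_cv (fun k => exp (a k)) (exp l).
Proof. apply continuity_seq, derivable_continuous_pt, derivable_pt_exp. Qed.

Lemma Un_cv_sumR n (u : nat -> vec) l :
  (forall i, (i < n)%nat -> Un_cv (fun k => u k i) (l i)) ->
  Un_cv (fun k => sumR n (u k)) (sumR n l).
Proof.
  induction n as [|n IH]; intros H; simpl; [apply Un_cv_const|].
  apply CV_plus; [apply IH; auto with arith | apply H; lia].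
Qed.

Lemma inv_INR_S_eventually_lt e :
  e > 0 -> exists N, forall k, (N <= k)%nat -> / INR (S k) < e.
Proof.
  intros He. destruct (archimed_cor1 e He) as [N [HN HN0]].
  exists N. intros k Hk. eapply Rle_lt_trans; [|exact HN].
  apply Rinv_le_contravar; [apply lt_0_INR; lia | apply le_INR; lia].
Qed.

Definition coord_cv (n : nat) (u : nat -> vec) (l : vec) : Prop :=
  forall i, (i < n)%nat -> Un_cv (fun k => u k i) (l i).

Definition dist_cv (n : nat) (u : nat -> vec) (l : vec) : Prop :=
  forall eps, eps > 0 -> exists N, forall k, (N <= k)%nat -> dist n (u k) l < eps.

Lemma coord_cv_of_dist_cv n u l : dist_cv n u l -> coord_cv n u l.
Proof.
  intros H i Hi e He. destruct (H e He) as [N HN]. exists N. intros k Hk.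
  eapply Rle_lt_trans; [apply coord_le_dist, Hi | apply HN, Hk].
Qed.

Lemma dist_cv_of_coord_cv n u l : coord_cv n u l -> dist_cv n u l.
Proof.
  intros H e He.
  assert (Hsq : Un_cv (fun k => dot n (vsub (u k) l) (vsub (u k) l)) (sumR n (fun _ => 0))).
  { apply (Un_cv_sumR n (fun k i => (u k i - l i) * (u k i - l i))). intros i Hi.
    replace 0 with ((l i - l i) * (l i - l i)) by ring.
    apply CV_mult; apply CV_minus; try apply H; auto; apply Un_cv_const. }
  assert (Hzero : sumR n (fun _ => 0) = 0) by (clear; induction n as [|n IH]; simpl; lra).
  rewrite Hzero in Hsq.
  destruct (Hsq (e * e)) as [N HN]; [nra|].
  exists N. intros k Hk. specialize (HN k Hk). unfold Rdist in HN.
  rewrite Rminus_0_r, Rabs_right in HN by (apply Rle_ge, dot_self_nonneg).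
  unfold dist, vnorm. rewrite <- (sqrt_square e) by lra.
  apply sqrt_lt_1_alt. split; [apply dot_self_nonneg | exact HN].
Qed.

Lemma coord_cv_unique n u a b :
  coord_cv n u a -> coord_cv n u b -> inR n a -> inR n b -> a = b.
Proof.
  intros Ha Hb Ia Ib. apply functional_extensionality. intros i.
  destruct (Nat.lt_ge_cases i n).
  - eapply UL_sequence; [apply Ha | apply Hb]; auto.
  - rewrite Ia, Ib; auto.
Qed.

Lemma Un_cv_dot n u w x y : coord_cv n u x -> coord_cv n w y ->
  Un_cv (fun k => dot n (u k) (w k)) (dot n x y).
Proof.
  intros Hu Hw. apply (Un_cv_sumR n (fun k i => u k i * w k i)).
  intros i Hi. apply CV_mult; auto.
Qed.

Definition strict_incr (sub : nat -> nat) : Prop := forall k, (sub k < sub (S k))%nat.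

Lemma strict_incr_lt sub : strict_incr sub -> forall a b, (a < b)%nat -> (sub a < sub b)%nat.
Proof.
  intros H a b Hab. induction Hab as [|b Hab IH]; [apply H|].
  specialize (H b). lia.
Qed.

Lemma strict_incr_ge sub : strict_incr sub -> forall k, (k <= sub k)%nat.
Proof. intros H k. induction k as [|k IH]; [lia|]. specialize (H k). lia. Qed.

Lemma strict_incr_comp s1 s2 :
  strict_incr s1 -> strict_incr s2 -> strict_incr (fun k => s1 (s2 k)).
Proof. intros H1 H2 k. apply strict_incr_lt, H2. exact H1. Qed.

Lemma Un_cv_subseq u l sub : strict_incr sub -> Un_cv u l -> Un_cv (fun k => u (sub k)) l.
Proof.
  intros Hs H e He. destruct (H e He) as [N HN]. exists N. intros k Hk.
  apply HN. pose proof (strict_incr_ge sub Hs k). lia.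
Qed.

Lemma dist_cv_subseq n u l sub :
  strict_incr sub -> dist_cv n u l -> dist_cv n (fun k => u (sub k)) l.
Proof.
  intros Hs H e He. destruct (H e He) as [N HN]. exists N. intros k Hk.
  apply HN. pose proof (strict_incr_ge sub Hs k). lia.
Qed.

Lemma ValAdh_subseq_cv u l : ValAdh u l ->
  exists sub, strict_incr sub /\ Un_cv (fun k => u (sub k)) l.
Proof.
  intros Hl.
  assert (Hnear : forall N, exists p, (N <= p)%nat /\ Rabs (u p - l) < / INR (S N)).
  { intros N. assert (Hpos : 0 < / INR (S N)) by (apply Rinv_0_lt_compat, lt_0_INR; lia).
    apply (Hl (disc l (mkposreal _ Hpos)) N).
    exists (mkposreal _ Hpos). intros y Hy; exact Hy. }
  destruct (choice _ Hnear) as [f Hf].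
  set (sub := fix sub k := match k with O => f O | S k' => f (S (sub k')) end).
  assert (Hsub : strict_incr sub) by (intros k; simpl; destruct (Hf (S (sub k))); lia).
  exists sub; split; [exact Hsub|].
  assert (Hclose : forall k, Rabs (u (sub k) - l) < / INR (S k)).
  { intros [|k]; [apply (Hf O)|]. change (Rabs (u (f (S (sub k))) - l) < / INR (S (S k))).
    destruct (Hf (S (sub k))) as [_ Hk].
    eapply Rlt_le_trans; [exact Hk|].
    apply Rinv_le_contravar; [apply lt_0_INR; lia | apply le_INR].
    pose proof (strict_incr_ge sub Hsub k). lia. }
  intros e He. destruct (inv_INR_S_eventually_lt e He) as [N HN].
  exists N. intros k Hk. eapply Rlt_trans; [apply Hclose | apply HN, Hk].
Qed.

Lemma bounded_subseq_cv (u : nat -> R) B : (forall k, Rabs (u k) <= B) ->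
  exists sub l, strict_incr sub /\ Un_cv (fun k => u (sub k)) l.
Proof.
  intros HB.
  destruct (Bolzano_Weierstrass u (fun c => -B <= c <= B) (compact_P3 _ _)) as [l Hl].
  - intros k. pose proof (HB k). pose proof (Rle_abs (u k)). pose proof (Rle_abs (- u k)).
    rewrite Rabs_Ropp in *. lra.
  - destruct (ValAdh_subseq_cv u l Hl) as [sub Hsub]. exists sub, l. exact Hsub.
Qed.

Lemma bounded_vec_subseq_cv n (u : nat -> vec) B :
  (forall k i, (i < n)%nat -> Rabs (u k i) <= B) ->
  exists sub l, strict_incr sub /\ inR n l /\ coord_cv n (fun k => u (sub k)) l.
Proof.
  revert u. induction n as [|n IH]; intros u HB.
  - exists (fun k => k), (fun _ => 0).
    split; [intros k; lia|]. split; intros i Hi; [reflexivity | lia].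
  - destruct (IH u) as [s1 [l1 [Hs1 [Hl1 Hc1]]]]; [auto with arith|].
    destruct (bounded_subseq_cv (fun k => u (s1 k) n) B) as [s2 [a [Hs2 Hc2]]]; [auto|].
    exists (fun k => s1 (s2 k)), (fun i => if Nat.eq_dec i n then a else l1 i).
    split; [apply strict_incr_comp; auto|]. split.
    + intros i Hi. destruct (Nat.eq_dec i n); [lia|]. apply Hl1; lia.
    + intros i Hi. destruct (Nat.eq_dec i n) as [->|Hne]; [exact Hc2|].
      apply (Un_cv_subseq (fun k => u (s1 k) i)), Hc1; auto; lia.
Qed.

Lemma abs_le_of_sq_le a C : 0 <= C -> a * a <= C * C -> Rabs a <= C.
Proof. intros HC H. apply Rabs_le. nra. Qed.

Lemma sphere_coord_le m x i : sphere m x -> (i < S m)%nat -> Rabs (x i) <= 1.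
Proof.
  intros [_ Hx] Hi. apply abs_le_of_sq_le; [lra|].
  rewrite Rmult_1_l, <- Hx. apply coord_sq_le_dot, Hi.
Qed.

Lemma sphere_of_coord_cv m u l :
  (forall k, sphere m (u k)) -> inR (S m) l -> coord_cv (S m) u l -> sphere m l.
Proof.
  intros Hu Hl Hc. split; [exact Hl|].
  apply (UL_sequence (fun k => dot (S m) (u k) (u k))); [apply Un_cv_dot; auto|].
  apply (Un_cv_ext (fun _ => 1)); [intros k; symmetry; apply (proj2 (Hu k)) | apply Un_cv_const].
Qed.

Lemma hyperbolic_time_sq m y : hyperbolic m y ->
  y 0%nat * y 0%nat = 1 + sumR (S m) (fun i => y (S i) * y (S i)).
Proof. intros [_ [Hy _]]. unfold lorentz in Hy. lra. Qed.

Lemma hyperbolic_time_ge_1 m y : hyperbolic m y -> 1 <= y 0%nat.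
Proof.
  intros Hy. pose proof (hyperbolic_time_sq m y Hy).
  assert (0 <= sumR (S m) (fun i => y (S i) * y (S i)))
    by (apply sumR_nonneg; intros; apply Rle_0_sqr).
  destruct Hy as [_ [_ Hpos]]. nra.
Qed.

Lemma hyperbolic_coord_le_time m y i : hyperbolic m y -> (i < S (S m))%nat ->
  Rabs (y i) <= y 0%nat.
Proof.
  intros Hy Hi. pose proof (hyperbolic_time_sq m y Hy).
  pose proof (hyperbolic_time_ge_1 m y Hy).
  apply abs_le_of_sq_le; [lra|]. destruct i as [|j]; [lra|].
  assert (y (S j) * y (S j) <= sumR (S m) (fun i => y (S i) * y (S i))).
  { apply (sumR_term_le (S m) (fun i => y (S i) * y (S i))); [intros; apply Rle_0_sqr | lia]. }
  lra.
Qed.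

Lemma hyperbolic_cap_seq_compact m C :
  seq_compact (S (S m)) (fun y => hyperbolic m y /\ y 0%nat <= C).
Proof.
  intros u Hu.
  destruct (bounded_vec_subseq_cv (S (S m)) u C) as [sub [l [Hs [Hl Hc]]]].
  { intros k i Hi. destruct (Hu k) as [Hy HC].
    eapply Rle_trans; [apply (hyperbolic_coord_le_time m), Hi|]; auto. }
  exists sub, l. split; [exact Hs|]. split; [|apply dist_cv_of_coord_cv, Hc].
  assert (Htime : Un_cv (fun k => u (sub k) 0%nat) (l 0%nat)) by (apply Hc; lia).
  assert (Hlor : lorentz m l l = -1).
  { apply (UL_sequence (fun k => lorentz m (u (sub k)) (u (sub k)))).
    - apply CV_plus; [apply CV_mult; [apply CV_opp|]; exact Htime|].
      apply (Un_cv_sumR (S m) (fun k i => u (sub k) (S i) * u (sub k) (S i))).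
      intros i Hi. apply CV_mult; apply Hc; lia.
    - apply (Un_cv_ext (fun _ => -1)); [|apply Un_cv_const].
      intros k. destruct (Hu (sub k)) as [[_ [Hk _]] _]. auto. }
  assert (1 <= l 0%nat).
  { apply (@Rle_cv_lim (fun _ => 1) (fun k => u (sub k) 0%nat)); [|apply Un_cv_const | exact Htime].
    intros k. apply (hyperbolic_time_ge_1 m), Hu. }
  assert (l 0%nat <= C).
  { apply (@Rle_cv_lim (fun k => u (sub k) 0%nat) (fun _ => C)); [|exact Htime | apply Un_cv_const].
    intros k. apply Hu. }
  repeat split; auto; lra.
Qed.

Lemma exp_le_compat x y : x <= y -> exp x <= exp y.
Proof.
  intros H. destruct (Rle_lt_or_eq_dec x y H) as [Hlt | ->]; [|lra].
  left. apply exp_increasing, Hlt.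
Qed.

Lemma exp_mul_exp_opp r : exp r * exp (- r) = 1.
Proof. rewrite exp_Ropp. apply Rinv_r, Rgt_not_eq, exp_pos. Qed.

Definition height (r G : R) : R := (exp r + exp (- r) * (1 + G)) / 2.

Lemma height_pos r G : 0 <= G -> 0 < height r G.
Proof. intros HG. unfold height. pose proof (exp_pos r). pose proof (exp_pos (- r)). nra. Qed.

Lemma height_le r G M : 0 <= G -> r ^ 2 + G <= M ->
  height r G <= exp (1 + M) * (2 + M) / 2.
Proof.
  intros HG HM. unfold height.
  assert (Habs : - (1 + M) <= r <= 1 + M) by nra.
  pose proof (exp_le_compat r (1 + M) ltac:(lra)).
  pose proof (exp_le_compat (- r) (1 + M) ltac:(lra)).
  pose proof (exp_pos (- r)).
  assert (G <= M) by nra. nra.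
Qed.

(* Each of [exp r], [exp (-r)] and [exp (-r) * G] is at most [2 h], and
   [|r| <= max (exp r) (exp (-r))]. *)
Lemma sq_add_le_height r G : 0 <= G -> r ^ 2 + G <= 8 * height r G ^ 2.
Proof.
  intros HG. unfold height. set (h := (exp r + exp (- r) * (1 + G)) / 2).
  pose proof (exp_pos r). pose proof (exp_pos (- r)). pose proof (exp_mul_exp_opp r).
  pose proof (exp_ineq1_le r). pose proof (exp_ineq1_le (- r)).
  assert (exp r <= 2 * h) by (unfold h; nra).
  assert (exp (- r) * G <= 2 * h) by (unfold h; nra).
  assert (exp (- r) <= 2 * h) by (unfold h; nra).
  assert (0 <= (2 * h - r) * (2 * h + r)) by (apply Rmult_le_pos; lra).
  assert (r ^ 2 <= 4 * h ^ 2) by nra.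
  assert (G <= 4 * h ^ 2).
  { replace G with (exp r * (exp (- r) * G)) by (rewrite <- Rmult_assoc; nra). nra. }
  lra.
Qed.

Lemma assoc_map_time m rho grad x :
  assoc_map m rho grad x 0%nat = height (rho x) (vnorm (S m) (grad x) ^ 2).
Proof.
  unfold assoc_map, height. set (G := vnorm (S m) (grad x) ^ 2).
  replace (-2 * rho x) with (- rho x + - rho x) by ring. rewrite exp_plus.
  pose proof (exp_mul_exp_opp (rho x)) as HEe.
  set (E := exp (rho x)) in *. set (e := exp (- rho x)) in *.
  transitivity ((E + (E * e) * e * (1 + G)) / 2); [field|].
  rewrite HEe. field.
Qed.

Lemma assoc_map_hyperbolic m rho grad x :
  sphere m x -> inR (S m) (grad x) -> dot (S m) (grad x) x = 0 ->
  hyperbolic m (assoc_map m rho grad x).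
Proof.
  intros [Hx Hxx] Hg Hgx.
  set (G := vnorm (S m) (grad x) ^ 2).
  set (e := exp (- rho x)).
  set (h := height (rho x) G).
  assert (Hc : exp (rho x) / 2 * (1 + exp (-2 * rho x) * (1 + G)) = h).
  { unfold h, G. rewrite <- assoc_map_time. unfold assoc_map. ring. }
  assert (Hspace : forall j, assoc_map m rho grad x (S j) = (h - e) * x j + e * grad x j).
  { intros j. unfold assoc_map. fold G e. rewrite Hc. ring. }
  split; [|split].
  - intros [|j] Hj; [lia|]. rewrite Hspace, Hx, Hg by lia. ring.
  - set (w := fun i => (h - e) * x i + e * grad x i).
    unfold lorentz.
    rewrite (sumR_ext _ _ (fun i => w i * w i)) by (intros; rewrite Hspace; reflexivity).
    fold (dot (S m) w w). unfold w.
    rewrite dot_lin_comb, Hxx, Hgx, <- vnorm_sq, assoc_map_time. fold G h.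
    pose proof (exp_mul_exp_opp (rho x)) as HEe. fold e in HEe.
    (* -h^2 + (h - e)^2 + e^2 G = - e exp(rho) = -1 *)
    unfold h, height. fold e. nra.
  - rewrite assoc_map_time. apply height_pos, pow2_ge_0.
Qed.

Section Continuity.

Variables (m : nat) (Omega : vec -> Prop) (rho : vec -> R) (grad : vec -> vec).

Lemma rho_seq_continuous v l :
  is_sph_gradient m Omega rho grad -> Omega l -> (forall k, Omega (v k)) ->
  coord_cv (S m) v l -> Un_cv (fun k => rho (v k)) (rho l).
Proof.
  intros Hgrad Hl Hv Hc. destruct (Hgrad l Hl) as [_ [_ Hdiff]].
  destruct (Hdiff 1 Rlt_0_1) as [delta [Hdelta Hrem]].
  assert (Hlin : Un_cv (fun k => dot (S m) (grad l) (vsub (v k) l)) 0).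
  { replace 0 with (dot (S m) (grad l) (vsub l l))
      by (unfold dot, vsub; clear; induction (S m) as [|n IH]; simpl; [|rewrite IH]; ring).
    apply Un_cv_dot; intros i Hi; [apply Un_cv_const|].
    apply CV_minus; [apply Hc, Hi | apply Un_cv_const]. }
  intros e He.
  destruct (dist_cv_of_coord_cv _ _ _ Hc (Rmin delta (e / 2))) as [N1 HN1];
    [apply Rmin_glb_lt; lra|].
  destruct (Hlin (e / 2)) as [N2 HN2]; [lra|].
  exists (N1 + N2)%nat. intros k Hk.
  specialize (HN1 k ltac:(lia)). specialize (HN2 k ltac:(lia)).
  pose proof (Rmin_l delta (e / 2)). pose proof (Rmin_r delta (e / 2)).
  specialize (Hrem (v k) (Hv k) ltac:(lra)).
  unfold Rdist in *. rewrite Rminus_0_r in HN2.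
  set (d := dot (S m) (grad l) (vsub (v k) l)) in *.
  replace (rho (v k) - rho l) with ((rho (v k) - rho l - d) + d) by ring.
  eapply Rle_lt_trans; [apply Rabs_triang | lra].
Qed.

Hypothesis HC1 : C1_on_sphere m Omega rho grad.

Lemma grad_seq_continuous v l : Omega l -> (forall k, Omega (v k)) ->
  coord_cv (S m) v l -> coord_cv (S m) (fun k => grad (v k)) (grad l).
Proof.
  intros Hl Hv Hc. apply coord_cv_of_dist_cv. intros e He.
  destruct (proj2 HC1 l Hl e He) as [delta [Hdelta Hgrad]].
  destruct (dist_cv_of_coord_cv _ _ _ Hc delta Hdelta) as [N HN].
  exists N. intros k Hk. apply Hgrad; auto.
Qed.

Lemma assoc_map_seq_continuous v l : Omega l -> (forall k, Omega (v k)) ->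
  coord_cv (S m) v l ->
  coord_cv (S (S m)) (fun k => assoc_map m rho grad (v k)) (assoc_map m rho grad l).
Proof.
  intros Hl Hv Hc.
  pose proof (rho_seq_continuous v l (proj1 HC1) Hl Hv Hc) as Hrho.
  pose proof (grad_seq_continuous v l Hl Hv Hc) as Hgrad.
  assert (HG : Un_cv (fun k => vnorm (S m) (grad (v k)) ^ 2) (vnorm (S m) (grad l) ^ 2)).
  { rewrite vnorm_sq. apply (Un_cv_ext (fun k => dot (S m) (grad (v k)) (grad (v k)))).
    - intros k. symmetry. apply vnorm_sq.
    - apply Un_cv_dot; exact Hgrad. }
  intros [|j] Hj; unfold assoc_map;
    repeat first [ assumption | apply Un_cv_const | apply Un_cv_exp
                 | apply CV_plus | apply CV_mult | apply CV_minus | apply CV_opp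
                 | apply Hc; lia | apply Hgrad; lia ].
Qed.

End Continuity.

Lemma not_tends_to_infty_seq m Omega F p :
  ~ tends_to_infty_at m Omega F p ->
  exists M (x : nat -> vec), (forall k, Omega (x k) /\ F (x k) <= M) /\ dist_cv (S m) x p.
Proof.
  intros Hnot. apply not_all_ex_not in Hnot as [M HM].
  assert (Hx : forall k, exists x, (Omega x /\ F x <= M) /\ dist (S m) x p < / INR (S k)).
  { intros k. apply NNPP. intros Hk. apply HM. exists (/ INR (S k)). split.
    - apply Rinv_0_lt_compat, lt_0_INR; lia.
    - intros x Hx Hd. apply Rnot_le_gt. intros Hle. apply Hk. eauto. }
  destruct (choice _ Hx) as [x Hxk]. exists M, x. split; [intros k; apply Hxk|].
  intros e He. destruct (inv_INR_S_eventually_lt e He) as [N HN]. exists N. intros k Hk.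
  eapply Rlt_trans; [apply Hxk | apply HN, Hk].
Qed.

Lemma proper_blowup_at_boundary m Omega rho grad :
  (forall x, Omega x -> sphere m x) -> is_sph_gradient m Omega rho grad ->
  proper_map m Omega (assoc_map m rho grad) ->
  forall p, boundary_pt m Omega p ->
    tends_to_infty_at m Omega (fun x => rho x ^ 2 + vnorm (S m) (grad x) ^ 2) p.
Proof.
  intros HOmega Hgrad Hproper p [Hp [HpOmega _]]. apply NNPP. intros Hnot.
  destruct (not_tends_to_infty_seq _ _ _ _ Hnot) as [M [x [Hx Hxp]]].
  set (C := exp (1 + M) * (2 + M) / 2).
  destruct (Hproper (fun y => hyperbolic m y /\ y 0%nat <= C) (fun y Hy => proj1 Hy)
              (hyperbolic_cap_seq_compact m C) x) as [sub [l [Hsub [[Hl _] Hxl]]]].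
  - intros k. destruct (Hx k) as [Hxk HM]. destruct (Hgrad _ Hxk) as [Hg [Hgx _]].
    split; [exact Hxk|]. split.
    + apply assoc_map_hyperbolic; auto.
    + rewrite assoc_map_time. apply height_le; [apply pow2_ge_0 | exact HM].
  - apply HpOmega. replace p with l; [exact Hl|].
    apply (coord_cv_unique (S m) (fun k => x (sub k))).
    + apply coord_cv_of_dist_cv. exact Hxl.
    + apply coord_cv_of_dist_cv, dist_cv_subseq; assumption.
    + apply (proj1 (HOmega l Hl)).
    + apply (proj1 Hp).
Qed.

Lemma limit_in_domain m Omega rho grad v l y0 :
  (forall p, boundary_pt m Omega p ->
     tends_to_infty_at m Omega (fun x => rho x ^ 2 + vnorm (S m) (grad x) ^ 2) p) ->
  (forall k, Omega (v k)) -> sphere m l -> dist_cv (S m) v l ->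
  Un_cv (fun k => assoc_map m rho grad (v k) 0%nat) y0 -> Omega l.
Proof.
  intros Hinf Hv Hl Hvl Hy. apply NNPP. intros HlOmega.
  assert (Hbd : boundary_pt m Omega l).
  { split; [exact Hl|]. split; [exact HlOmega|].
    intros r Hr. destruct (Hvl r Hr) as [N HN]. exists (v N). split; [apply Hv | apply HN; lia]. }
  destruct (Hinf l Hbd (8 * (y0 + 1) ^ 2)) as [delta [Hdelta Hbig]].
  destruct (Hvl delta Hdelta) as [N1 HN1].
  destruct (Hy 1 Rlt_0_1) as [N2 HN2].
  set (k := (N1 + N2)%nat).
  specialize (Hbig (v k) (Hv k) (HN1 k ltac:(lia))).
  specialize (HN2 k ltac:(lia)). unfold Rdist in HN2. apply Rabs_def2 in HN2.
  rewrite assoc_map_time in HN2.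
  set (G := vnorm (S m) (grad (v k)) ^ 2) in *.
  pose proof (sq_add_le_height (rho (v k)) G (pow2_ge_0 _)).
  pose proof (height_pos (rho (v k)) G (pow2_ge_0 _)).
  nra.
Qed.

Lemma blowup_at_boundary_proper m Omega rho grad :
  (forall x, Omega x -> sphere m x) -> C1_on_sphere m Omega rho grad ->
  (forall p, boundary_pt m Omega p ->
     tends_to_infty_at m Omega (fun x => rho x ^ 2 + vnorm (S m) (grad x) ^ 2) p) ->
  proper_map m Omega (assoc_map m rho grad).
Proof.
  intros HOmega HC1 Hinf K HK HKc u Hu.
  destruct (HKc (fun k => assoc_map m rho grad (u k))) as [s1 [y [Hs1 [HKy Hy]]]];
    [intros k; apply Hu|].
  destruct (bounded_vec_subseq_cv (S m) (fun k => u (s1 k)) 1) as [s2 [l [Hs2 [Hl Hcl]]]].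
  { intros k i Hi. apply (sphere_coord_le m); [apply HOmega, Hu | exact Hi]. }
  set (v := fun k => u (s1 (s2 k))).
  assert (Hv : forall k, Omega (v k)) by (intros k; apply Hu).
  assert (Hvy : coord_cv (S (S m)) (fun k => assoc_map m rho grad (v k)) y).
  { apply coord_cv_of_dist_cv.
    apply (dist_cv_subseq _ (fun k => assoc_map m rho grad (u (s1 k)))); assumption. }
  assert (HlOmega : Omega l).
  { apply (limit_in_domain m Omega rho grad v l (y 0%nat) Hinf Hv).
    - apply (sphere_of_coord_cv m v); [intros k; apply HOmega, Hv | exact Hl | exact Hcl].
    - apply dist_cv_of_coord_cv, Hcl.
    - apply Hvy; lia. }
  exists (fun k => s1 (s2 k)), l. split; [apply strict_incr_comp; assumption|]. split.
  - split; [exact HlOmega|]. replace (assoc_map m rho grad l) with y; [exact HKy|].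
    apply (coord_cv_unique (S (S m)) (fun k => assoc_map m rho grad (v k))).
    + exact Hvy.
    + apply (assoc_map_seq_continuous m Omega); assumption.
    + apply (proj1 (HK _ HKy)).
    + destruct (proj1 HC1 l HlOmega) as [Hg [Hgl _]].
      apply (proj1 (assoc_map_hyperbolic m rho grad l (HOmega l HlOmega) Hg Hgl)).
  - apply dist_cv_of_coord_cv, Hcl.
Qed.

Theorem mainTheorem1 (m : nat) (Omega : vec -> Prop) (rho : vec -> R) (grad : vec -> vec) :
  is_domain m Omega ->
  (exists q, sphere m q /\ ~ Omega q) ->
  C1_on_sphere m Omega rho grad ->
  (proper_map m Omega (assoc_map m rho grad) <->
   forall p, boundary_pt m Omega p ->
     tends_to_infty_at m Omega (fun x => rho x ^ 2 + vnorm (S m) (grad x) ^ 2) p).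
Proof.
  intros [HOmega _] _ HC1. split.
  - apply proper_blowup_at_boundary; [exact HOmega | exact (proj1 HC1)].
  - apply blowup_at_boundary_proper; assumption.
Qed.
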